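(* Let $\mu_0\in(-1,0)$ and $y>0$. If $$x\ge \frac{y^{\mu_0}e^{-y}}{\Gamma(\mu_0+1,y)}-1$$ (and $x>0$), then $Q_{\mu_0}(x,y)>0$.
   Context: For real $\mu$, $x>0$, $y\ge 0$: $Q_{\mu}(x,y)=x^{\frac12(1-\mu)}\int_y^{\infty} t^{\frac12(\mu-1)}e^{-t-x}I_{\mu-1}(2\sqrt{xt})\,dt$, where $I_\nu$ is the modified Bessel function of the first kind. $\Gamma(a,y)=\int_y^\infty t^{a-1}e^{-t}dt$. *)

From Stdlib Require Import Reals.
From Coquelicot Require Import Coquelicot.
Open Scope R_scope.

Definition GammaPos (a : R) : R :=
  RInt_gen (fun t => Rpower t (a - 1) * exp (- t)) (at_right 0) (Rbar_locally p_infty).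

Fixpoint poch (a : R) (n : nat) : R :=
  match n with O => 1 | S m => poch a m * (a + INR m) end.

(* Gamma on all reals (meaningful off the nonpositive integers), via the
   functional equation Gamma(a) = Gamma(a+N) / (a (a+1) ... (a+N-1)). *)
Definition Gamma (a : R) : R :=
  let N := Z.to_nat (up (- a)) in GammaPos (a + INR N) / poch a N.

Definition GammaUp (a y : R) : R :=
  RInt_gen (fun t => Rpower t (a - 1) * exp (- t)) (at_point y) (Rbar_locally p_infty).

Definition BesselI (nu z : R) : R :=
  Series (fun k => Rpower (z / 2) (2 * INR k + nu) / (INR (Factorial.fact k) * Gamma (INR k + nu + 1))).

Definition Qmu (mu x y : R) : R :=
  Rpower x ((1 - mu) / 2) *
  RInt_gen (fun t => Rpower t ((mu - 1) / 2) * exp (- t - x) * BesselI (mu - 1) (2 * sqrt (x * t)))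
    (at_point y) (Rbar_locally p_infty).

(* Expanding the Bessel function, Q_mu(x,y) = e^(-x) int_y^oo t^(mu-1) e^(-t) P(xt) dt with
   P(s) = sum_k s^k / (k! Gamma(k+mu)).  For -1 < mu < 0 only the constant coefficient
   1/Gamma(mu) = mu/Gamma(mu+1) is negative, so P(s) >= c0 + c1 s + c2 s^2 and the integral is at least
   (mu Gamma(mu,y) + x Gamma(mu+1,y)) / Gamma(mu+1) + c2 x^2 Gamma(mu+2,y).  By the recurrence
   Gamma(mu+1,y) = mu Gamma(mu,y) + y^mu e^(-y) the first term is ((x+1) Gamma(mu+1,y) - y^mu e^(-y)) / Gamma(mu+1),
   which is nonnegative exactly under the hypothesis, and the last term is positive.
   The analytic side conditions come from domination by e^(-t/2), and P has infinite radius of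
   convergence because Gamma(k+mu) >= M^k e^(-(M+1)) / (M+1)^2 for every M >= 1. *)

From Stdlib Require Import Reals Lra Lia.
From Coquelicot Require Import Coquelicot.
Open Scope R_scope.

Lemma ball_R_Rabs (x y e : R) : ball x e y <-> Rabs (y - x) < e.
Proof. reflexivity. Qed.

Lemma locally_gt_0 (x : R) : 0 < x -> locally x (fun y => 0 < y).
Proof.
  intros Hx. exists (mkposreal x Hx). intros y Hy.
  apply ball_R_Rabs, Rabs_lt_between' in Hy. simpl in Hy. lra.
Qed.

Lemma filterlim_at_point (f : R -> R) (c : R) : filterlim f (at_point c) (locally (f c)).
Proof. intros P HP. unfold filtermap, at_point. now apply locally_singleton. Qed.

Lemma filter_prod_at_point_p_infty (y : R) :
  filter_prod (at_point y) (Rbar_locally p_infty) (fun ab => fst ab = y /\ y < snd ab).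
Proof.
  apply Filter_prod with (fun a => a = y) (fun b => y < b); [reflexivity | now exists y |].
  intros a b -> Hb; auto.
Qed.

Lemma exp_le_compat (x y : R) : x <= y -> exp x <= exp y.
Proof. intros [H | ->]; [left; now apply exp_increasing | lra]. Qed.

Lemma Rpower_pos (t b : R) : 0 < Rpower t b.
Proof. apply exp_pos. Qed.

Lemma is_derive_Rpower (t b : R) : 0 < t -> is_derive (fun u => Rpower u b) t (b * Rpower t (b - 1)).
Proof. intros; apply is_derive_Reals, derivable_pt_lim_power; auto. Qed.

Lemma continuous_Rpower (t b : R) : 0 < t -> continuous (fun u => Rpower u b) t.
Proof. intros; apply (ex_derive_continuous (fun u => Rpower u b)); eexists; apply is_derive_Rpower; auto. Qed.

Lemma Rpower_le_nonpos (b y t : R) : b <= 0 -> 0 < y <= t -> Rpower t b <= Rpower y b.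
Proof.
  intros Hb Hyt.
  assert (H : Rpower y (- b) <= Rpower t (- b)) by (apply Rle_Rpower_l; lra).
  rewrite !Rpower_Ropp in H.
  rewrite <- (Rinv_inv (Rpower t b)), <- (Rinv_inv (Rpower y b)).
  apply Rinv_le_contravar; [apply Rinv_0_lt_compat, Rpower_pos | exact H].
Qed.

Lemma pow_le_fact_exp (z : R) (n : nat) : 0 <= z -> z ^ n <= INR (Factorial.fact n) * exp z.
Proof.
  intros Hz.
  assert (Hf := INR_fact_lt_0 n).
  assert (Hsum : z ^ n / INR (Factorial.fact n) <= exp z).
  { eapply Rle_trans; [|apply (exp_ge_taylor z n Hz)].
    destruct n as [|n]; [simpl; lra|].
    rewrite tech5.
    assert (0 <= sum_f_R0 (fun k => z ^ k / INR (Factorial.fact k)) n); [|lra].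
    apply cond_pos_sum. intros k. apply Rmult_le_pos; [now apply pow_le|].
    left; apply Rinv_0_lt_compat, INR_fact_lt_0. }
  unfold Rdiv in Hsum.
  apply (Rmult_le_compat_l (INR (Factorial.fact n))) in Hsum; [|lra].
  rewrite <- Rmult_assoc, (Rmult_comm _ (z ^ n)), Rmult_assoc, Rinv_r, Rmult_1_r in Hsum; lra.
Qed.

Lemma Rpower_le_exp_half (b c : R) :
  0 < c -> exists C, 0 < C /\ forall t, c <= t -> Rpower t b <= C * exp (t / 2).
Proof.
  intros Hc.
  destruct (INR_unbounded b) as [N HN].
  exists (Rpower c b + 1 + INR (Factorial.fact N) * 2 ^ N).
  assert (Hf := INR_fact_lt_0 N). assert (H2 := pow_lt 2 N Rlt_0_2).
  split; [pose proof (Rpower_pos c b); nra|].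
  intros t Ht.
  assert (He : 1 <= exp (t / 2)) by (rewrite <- exp_0; apply exp_le_compat; lra).
  assert (HtN : t ^ N <= INR (Factorial.fact N) * 2 ^ N * exp (t / 2)).
  { replace (t ^ N) with (2 ^ N * (t / 2) ^ N) by (rewrite <- Rpow_mult_distr; f_equal; field).
    pose proof (pow_le_fact_exp (t / 2) N ltac:(lra)). nra. }
  assert (Hb : Rpower t b <= Rpower c b + 1 + t ^ N).
  { pose proof (Rpower_pos c b). pose proof (pow_le t N ltac:(lra)).
    destruct (Rle_dec 0 b) as [Hb0|Hb0]; [destruct (Rle_dec 1 t) as [Ht1|Ht1]|].
    - rewrite <- Rpower_pow by lra. pose proof (Rle_Rpower t b (INR N) Ht1 ltac:(lra)). lra.
    - assert (Hle1 : Rpower t b <= Rpower 1 b) by (apply Rle_Rpower_l; lra).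
      unfold Rpower at 2 in Hle1. rewrite ln_1, Rmult_0_r, exp_0 in Hle1. lra.
    - pose proof (Rpower_le_nonpos b c t ltac:(lra) ltac:(lra)). lra. }
  pose proof (Rpower_pos c b). nra.
Qed.

(** * Improper integrals *)

Lemma ex_RInt_continuous_R (f : R -> R) (a b : R) :
  (forall t, Rmin a b <= t <= Rmax a b -> continuous f t) -> ex_RInt f a b.
Proof. intros; apply (ex_RInt_continuous (V := R_CompleteNormedModule)); auto. Qed.

Lemma RInt_gen_at_point_RInt (f : R -> R) (a b : R) :
  ex_RInt f a b -> RInt_gen f (at_point a) (at_point b) = RInt f a b.
Proof. intros H. apply is_RInt_gen_unique, is_RInt_gen_at_point, RInt_correct, H. Qed.

Lemma RInt_Chasles_sub (f : R -> R) (c u v : R) :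
  ex_RInt f c u -> ex_RInt f c v -> RInt f u v = RInt f c v - RInt f c u.
Proof.
  intros Hu Hv.
  rewrite <- (RInt_Chasles f u c v) by (auto; now apply ex_RInt_swap).
  rewrite <- (opp_RInt_swap f c u) by auto.
  unfold plus, opp; simpl; ring.
Qed.

Definition dominated_on (f g : R -> R) (a b : R) : Prop :=
  forall t, Rmin a b <= t <= Rmax a b -> continuous f t /\ continuous g t /\ Rabs (f t) <= g t.

Lemma dominated_on_sym (f g : R -> R) (a b : R) : dominated_on f g a b -> dominated_on f g b a.
Proof. intros H t Ht. apply H. rewrite Rmin_comm, Rmax_comm. exact Ht. Qed.

Lemma dominated_on_between (f g : R -> R) (c u v : R) :
  dominated_on f g c u -> dominated_on f g c v -> dominated_on f g u v.
Proof.
  intros Hu Hv t Ht.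
  assert (Rmin c u <= t <= Rmax c u \/ Rmin c v <= t <= Rmax c v) as [H | H]
    by (unfold Rmin, Rmax in *; repeat destruct Rle_dec; lra).
  - now apply Hu.
  - now apply Hv.
Qed.

Lemma ex_RInt_dominated_l (f g : R -> R) (a b : R) : dominated_on f g a b -> ex_RInt f a b.
Proof. intros H. apply ex_RInt_continuous_R. intros t Ht. now apply H. Qed.

Lemma ex_RInt_dominated_r (f g : R -> R) (a b : R) : dominated_on f g a b -> ex_RInt g a b.
Proof. intros H. apply ex_RInt_continuous_R. intros t Ht. now apply H. Qed.

Lemma abs_RInt_le_dominated (f g : R -> R) (a b : R) :
  dominated_on f g a b -> Rabs (RInt f a b) <= Rabs (RInt g a b).
Proof.
  assert (Hord : forall a b, a <= b -> dominated_on f g a b -> Rabs (RInt f a b) <= Rabs (RInt g a b)).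
  { clear a b. intros a b Hab H.
    assert (Hab' : forall t, a <= t <= b -> Rmin a b <= t <= Rmax a b)
      by (intros; rewrite Rmin_left, Rmax_right; lra).
    assert (Efa : ex_RInt (fun t => Rabs (f t)) a b).
    { apply ex_RInt_continuous_R. intros t Ht.
      apply continuous_comp; [now apply H | apply continuous_Rabs]. }
    assert (Hle : RInt (fun t => Rabs (f t)) a b <= RInt g a b).
    { apply RInt_le; auto; [eapply ex_RInt_dominated_r, H|].
      intros t Ht. apply H, Hab'. lra. }
    assert (0 <= RInt (fun t => Rabs (f t)) a b) by (apply RInt_ge_0; auto; intros; apply Rabs_pos).
    eapply Rle_trans; [apply abs_RInt_le; auto; eapply ex_RInt_dominated_l, H|].
    rewrite (Rabs_right (RInt g a b)); lra. }
  intros H. destruct (Rle_dec a b); [now apply Hord|].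
  apply dominated_on_sym in H.
  rewrite <- (opp_RInt_swap f), <- (opp_RInt_swap g);
    [| eapply ex_RInt_dominated_r, H | eapply ex_RInt_dominated_l, H].
  unfold opp; simpl. rewrite !Rabs_Ropp.
  apply Hord; [lra | exact H].
Qed.

(* Through the Cauchy criterion: the limit of [RInt f c b] is not known in advance. *)
Lemma ex_RInt_gen_dominated (Fb : (R -> Prop) -> Prop) (FF : ProperFilter Fb)
    (c : R) (f g : R -> R) (lg : R) :
  Fb (fun b => dominated_on f g c b) ->
  is_RInt_gen g (at_point c) Fb lg -> ex_RInt_gen f (at_point c) Fb.
Proof.
  intros Hdom Hg.
  assert (PF : ProperFilter (filter_prod (at_point c) Fb)) by (apply filter_prod_proper; auto).
  apply (filterlimi_locally_cauchy (U := R_CompleteSpace)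
           (fun ab : R * R => is_RInt f (fst ab) (snd ab))).
  - apply Filter_prod with (fun a => a = c) (fun b => dominated_on f g c b); [reflexivity | auto |].
    intros a b -> Hb. split.
    + destruct (ex_RInt_dominated_l f g c b Hb) as [l Hl]. now exists l.
    + intros y1 y2 H1 H2. simpl in H1, H2.
      apply (is_RInt_unique (V := R_CompleteNormedModule)) in H1, H2. congruence.
  - intros eps.
    pose proof (proj1 (filterlimi_locally _ _) Hg (pos_div_2 eps)) as Hnear.
    exists (fun ab : R * R => (fst ab = c /\ dominated_on f g c (snd ab)) /\
      exists z, is_RInt g (fst ab) (snd ab) z /\ ball lg (pos_div_2 eps) z).
    split.
    + apply filter_and; auto.
      apply Filter_prod with (fun a => a = c) (fun b => dominated_on f g c b); [reflexivity | auto |].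
      intros a b Ha Hb. now split.
    + intros [u1 u] [v1 v] [[-> Hu] [zu [Hzu Bu]]] [[-> Hv] [zv [Hzv Bv]]] fu fv Hfu Hfv.
      simpl in *.
      apply (is_RInt_unique (V := R_CompleteNormedModule)) in Hfu, Hfv, Hzu, Hzv.
      change (Rabs (zu - lg) < eps / 2) in Bu. change (Rabs (zv - lg) < eps / 2) in Bv.
      apply ball_R_Rabs.
      pose proof (abs_RInt_le_dominated f g u v (dominated_on_between f g c u v Hu Hv)) as Hab.
      rewrite (RInt_Chasles_sub f c), (RInt_Chasles_sub g c) in Hab;
        try (first [exact (ex_RInt_dominated_l f g _ _ Hu) | exact (ex_RInt_dominated_l f g _ _ Hv)
                  | exact (ex_RInt_dominated_r f g _ _ Hu) | exact (ex_RInt_dominated_r f g _ _ Hv)]).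
      rewrite Hfu, Hfv, Hzu, Hzv in Hab.
      assert (Rabs (zv - zu) < eps); [|lra].
      replace (zv - zu) with ((zv - lg) - (zu - lg)) by ring.
      eapply Rle_lt_trans; [apply Rabs_triang|]. rewrite Rabs_Ropp. lra.
Qed.

Lemma is_RInt_gen_le {Fa Fb : (R -> Prop) -> Prop} {FA : ProperFilter Fa} {FB : ProperFilter Fb}
    (f g : R -> R) (lf lg : R) :
  filter_prod Fa Fb (fun ab => fst ab <= snd ab /\ forall t, fst ab <= t <= snd ab -> f t <= g t) ->
  is_RInt_gen f Fa Fb lf -> is_RInt_gen g Fa Fb lg -> lf <= lg.
Proof.
  intros Hfg Hf Hg.
  assert (Hd := is_RInt_gen_minus _ _ _ _ Hg Hf).
  assert (N : norm (minus lg lf) <= minus lg lf).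
  { apply (RInt_gen_norm (V := R_CompleteNormedModule) (Fa := Fa) (Fb := Fb) (fun t => minus (g t) (f t))
                          (fun t => minus (g t) (f t))); auto.
    - eapply filter_imp; [|exact Hfg]. now intros ab [H _].
    - eapply filter_imp; [|exact Hfg]. intros ab [_ H] t Ht.
      specialize (H t Ht). unfold norm, minus, plus, opp; simpl; unfold abs; simpl.
      rewrite Rabs_right; lra. }
  unfold norm, minus, plus, opp in N; simpl in N; unfold abs in N; simpl in N.
  pose proof (Rabs_pos (lg + - lf)). lra.
Qed.

Lemma RInt_gen_ge_0 {Fa Fb : (R -> Prop) -> Prop} {FA : ProperFilter Fa} {FB : ProperFilter Fb}
    (f : R -> R) :
  filter_prod Fa Fb (fun ab => fst ab <= snd ab) -> (forall t, 0 <= f t) ->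
  ex_RInt_gen f Fa Fb -> 0 <= RInt_gen f Fa Fb.
Proof.
  intros Hle Hf Ex.
  replace 0 with (scal 0 (RInt_gen f Fa Fb)) at 1 by (unfold scal; simpl; unfold mult; simpl; ring).
  apply (is_RInt_gen_le (Fa := Fa) (Fb := Fb) (fun t => scal 0 (f t)) f (scal 0 (RInt_gen f Fa Fb)) _).
  - eapply filter_imp; [|exact Hle]. intros ab Hab. split; [exact Hab|].
    intros t _. unfold scal; simpl; unfold mult; simpl. rewrite Rmult_0_l. apply Hf.
  - apply (is_RInt_gen_scal f 0), (RInt_gen_correct (V := R_CompleteNormedModule)), Ex.
  - apply (RInt_gen_correct (V := R_CompleteNormedModule)), Ex.
Qed.

Lemma filterlim_p_infty_dominated_exp (F : R -> R) (C c : R) :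
  0 < C -> (forall t, c <= t -> Rabs (F t) <= C * exp (- t / 2)) ->
  filterlim F (Rbar_locally p_infty) (locally 0).
Proof.
  intros HC HF. apply filterlim_locally. intros eps.
  assert (He : 0 < eps / C) by (apply Rdiv_lt_0_compat; [apply cond_pos | exact HC]).
  exists (Rmax c (-2 * ln (eps / C))). intros t Ht. apply ball_R_Rabs.
  pose proof (Rmax_l c (-2 * ln (eps / C))). pose proof (Rmax_r c (-2 * ln (eps / C))).
  assert (Hexp : exp (- t / 2) < eps / C).
  { rewrite <- (exp_ln (eps / C)) by exact He. apply exp_increasing. lra. }
  rewrite Rminus_0_r. eapply Rle_lt_trans; [apply HF; lra|].
  apply (Rmult_lt_compat_l C) in Hexp; [|exact HC].
  replace (C * (eps / C)) with (pos eps) in Hexp by (field; lra). exact Hexp.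
Qed.

Lemma is_RInt_gen_exp_half (c : R) :
  is_RInt_gen (fun t => exp (- t / 2)) (at_point c) (Rbar_locally p_infty) (2 * exp (- c / 2)).
Proof.
  set (F := fun t => -2 * exp (- t / 2)).
  assert (DF : forall t, is_derive F t (exp (- t / 2))) by (intros t; unfold F; auto_derive; [auto | unfold Rdiv; field]).
  apply is_RInt_gen_ext with (Derive F).
  { apply filter_forall. intros ab t _. apply is_derive_unique, DF. }
  replace (2 * exp (- c / 2)) with (0 - F c) by (unfold F; ring).
  apply is_RInt_gen_Derive.
  - apply filter_forall. intros ab t _. eexists; apply DF.
  - apply filter_forall. intros ab t _.
    apply continuous_ext_loc with (fun t => exp (- t / 2)).
    { apply filter_forall; intros u; symmetry; apply is_derive_unique, DF. }
    apply (ex_derive_continuous (fun t => exp (- t / 2))). auto_derive; auto.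
  - apply filterlim_at_point.
  - apply (filterlim_p_infty_dominated_exp F 2 c); [lra|].
    intros t _. unfold F. rewrite Rabs_mult, Rabs_left, Rabs_right by (pose proof (exp_pos (- t / 2)); lra).
    lra.
Qed.

Lemma filterlim_Rpower_at_right_0 (a : R) : 0 < a ->
  filterlim (fun t => Rpower t a) (at_right 0) (locally 0).
Proof.
  intros Ha. apply filterlim_locally. intros eps.
  exists (mkposreal _ (exp_pos (ln eps / a))). intros u Hu Hu0.
  change (Rabs (u - 0) < exp (ln eps / a)) in Hu. apply ball_R_Rabs.
  rewrite Rminus_0_r in Hu |- *. rewrite Rabs_right in Hu by lra.
  rewrite Rabs_right by (left; apply Rpower_pos).
  pose proof (ln_increasing _ _ Hu0 Hu) as H. rewrite ln_exp in H.
  unfold Rpower. rewrite <- (exp_ln eps) by apply cond_pos. apply exp_increasing.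
  apply (Rmult_lt_compat_l a) in H; [|exact Ha].
  replace (a * (ln eps / a)) with (ln eps) in H by (field; lra). lra.
Qed.

Lemma is_RInt_gen_Rpower_at_0 (a c : R) : 0 < a -> 0 < c ->
  is_RInt_gen (fun t => Rpower t (a - 1)) (at_right 0) (at_point c) (/ a * Rpower c a).
Proof.
  intros Ha Hc.
  set (F := fun t => / a * Rpower t a).
  assert (DF : forall t, 0 < t -> is_derive F t (Rpower t (a - 1))).
  { intros t Ht. unfold F.
    replace (Rpower t (a - 1)) with (/ a * (a * Rpower t (a - 1))) by (field; lra).
    apply (is_derive_scal (fun t => Rpower t a)), is_derive_Rpower, Ht. }
  assert (Hseg : filter_prod (at_right 0) (at_point c)
                   (fun ab : R * R => forall t, Rmin (fst ab) (snd ab) <= t <= Rmax (fst ab) (snd ab) -> 0 < t)).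
  { apply Filter_prod with (fun a => 0 < a) (fun b => b = c).
    - unfold at_right, within. apply filter_forall; auto.
    - reflexivity.
    - intros u v Hu -> t Ht. simpl in Ht. unfold Rmin, Rmax in Ht. destruct Rle_dec; lra. }
  apply is_RInt_gen_ext with (Derive F).
  { eapply filter_imp; [|exact Hseg]. intros ab Hab t Ht.
    apply is_derive_unique, DF, Hab. split; lra. }
  replace (/ a * Rpower c a) with (F c - 0) by (unfold F; ring).
  apply is_RInt_gen_Derive.
  - eapply filter_imp; [|exact Hseg]. intros ab Hab t Ht. eexists; apply DF, Hab, Ht.
  - eapply filter_imp; [|exact Hseg]. intros ab Hab t Ht.
    apply continuous_ext_loc with (fun t => Rpower t (a - 1)).
    { eapply filter_imp; [|apply locally_gt_0, Hab, Ht].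
      intros u Hu; symmetry; apply is_derive_unique, DF, Hu. }
    apply continuous_Rpower, Hab, Ht.
  - pose proof (filterlim_comp _ _ _ _ (fun z => scal (/ a) z) _ _ _
                  (filterlim_Rpower_at_right_0 a Ha) (filterlim_scal_r (/ a) 0)) as H.
    unfold scal in H; simpl in H; unfold mult in H; simpl in H. rewrite Rmult_0_r in H. exact H.
  - apply filterlim_at_point.
Qed.

(** * Complete and incomplete Gamma functions *)

Definition gamma_integrand (a t : R) : R := Rpower t (a - 1) * exp (- t).

Lemma gamma_integrand_pos (a t : R) : 0 < gamma_integrand a t.
Proof. apply Rmult_lt_0_compat; [apply Rpower_pos | apply exp_pos]. Qed.

Lemma continuous_gamma_integrand (a t : R) : 0 < t -> continuous (gamma_integrand a) t.
Proof.
  intros Ht. apply (continuous_mult (fun u => Rpower u (a - 1)) (fun u => exp (- u))).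
  - now apply continuous_Rpower.
  - apply (ex_derive_continuous (fun u => exp (- u))). auto_derive; auto.
Qed.

Lemma is_derive_gamma_integrand_succ (a t : R) : 0 < t ->
  is_derive (gamma_integrand (a + 1)) t (a * gamma_integrand a t - gamma_integrand (a + 1) t).
Proof.
  intros Ht. unfold gamma_integrand. replace (a + 1 - 1) with a by ring.
  assert (De : is_derive (fun t => exp (- t)) t (- exp (- t))) by (auto_derive; auto; ring).
  pose proof (is_derive_mult (fun t => Rpower t a) (fun t => exp (- t)) t _ _
                (is_derive_Rpower t a Ht) De Rmult_comm) as H.
  replace (a * (Rpower t (a - 1) * exp (- t)) - Rpower t a * exp (- t))
    with (plus (mult (a * Rpower t (a - 1)) (exp (- t))) (mult (Rpower t a) (- exp (- t))))
    by (unfold plus, mult; simpl; ring).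
  exact H.
Qed.

Lemma gamma_integrand_le_exp_half (a c : R) : 0 < c ->
  exists C, 0 < C /\ forall t, c <= t -> gamma_integrand a t <= C * exp (- t / 2).
Proof.
  intros Hc. destruct (Rpower_le_exp_half (a - 1) c Hc) as [C [HC HB]].
  exists C. split; [exact HC|]. intros t Ht. unfold gamma_integrand.
  replace (exp (- t / 2)) with (exp (t / 2) * exp (- t)) by (rewrite <- exp_plus; f_equal; field).
  specialize (HB t Ht). pose proof (exp_pos (- t)). nra.
Qed.

Lemma gamma_integrand_add_nat (a t : R) (n : nat) :
  0 < t -> gamma_integrand (a + INR n) t = gamma_integrand a t * t ^ n.
Proof.
  intros Ht. unfold gamma_integrand.
  replace (a + INR n - 1) with ((a - 1) + INR n) by ring.
  rewrite Rpower_plus, Rpower_pow by exact Ht. ring.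
Qed.

Lemma ex_RInt_gen_gamma_at_0 (a c : R) : 0 < a -> 0 < c ->
  ex_RInt_gen (gamma_integrand a) (at_right 0) (at_point c).
Proof.
  intros Ha Hc.
  assert (Hswap : ex_RInt_gen (gamma_integrand a) (at_point c) (at_right 0)).
  { apply (ex_RInt_gen_dominated (at_right 0) (at_right_proper_filter 0) c _
             (fun t => Rpower t (a - 1)) (opp (/ a * Rpower c a))).
    - unfold at_right, within. apply filter_forall. intros u Hu t Ht.
      assert (Ht0 : 0 < t) by (unfold Rmin, Rmax in Ht; destruct Rle_dec; lra).
      split; [now apply continuous_gamma_integrand|split; [now apply continuous_Rpower|]].
      rewrite Rabs_right by (left; apply gamma_integrand_pos). unfold gamma_integrand.
      assert (exp (- t) <= 1) by (rewrite <- exp_0; apply exp_le_compat; lra).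
      pose proof (Rpower_pos t (a - 1)). nra.
    - apply (is_RInt_gen_swap (V := R_NormedModule)). now apply is_RInt_gen_Rpower_at_0. }
  destruct Hswap as [l Hl]. exists (opp l).
  apply (is_RInt_gen_swap (V := R_NormedModule)), Hl.
Qed.

Lemma ex_RInt_gen_gamma_at_p_infty (a c : R) : 0 < c ->
  ex_RInt_gen (gamma_integrand a) (at_point c) (Rbar_locally p_infty).
Proof.
  intros Hc.
  destruct (gamma_integrand_le_exp_half a c Hc) as [C [HC HB]].
  apply (ex_RInt_gen_dominated (Rbar_locally p_infty) (Rbar_locally_filter p_infty) c _
           (fun t => C * exp (- t / 2)) (C * (2 * exp (- c / 2)))).
  - exists c. intros b Hb t Ht.
    assert (c <= t) by (unfold Rmin, Rmax in Ht; destruct Rle_dec; lra).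
    split; [apply continuous_gamma_integrand; lra|split].
    + apply (ex_derive_continuous (fun t => C * exp (- t / 2))). auto_derive; auto.
    + rewrite Rabs_right by (left; apply gamma_integrand_pos). now apply HB.
  - apply (is_RInt_gen_scal (fun t => exp (- t / 2)) C), is_RInt_gen_exp_half.
Qed.

Lemma is_RInt_gen_GammaUp (a y : R) : 0 < y ->
  is_RInt_gen (gamma_integrand a) (at_point y) (Rbar_locally p_infty) (GammaUp a y).
Proof.
  intros Hy. apply (RInt_gen_correct (V := R_CompleteNormedModule)).
  now apply ex_RInt_gen_gamma_at_p_infty.
Qed.

Lemma RInt_le_GammaUp (a c d : R) : 0 < c < d -> RInt (gamma_integrand a) c d <= GammaUp a c.
Proof.
  intros Hcd.
  assert (E : ex_RInt (gamma_integrand a) c d).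
  { apply ex_RInt_continuous_R. intros t Ht. apply continuous_gamma_integrand.
    unfold Rmin in Ht; destruct Rle_dec; lra. }
  unfold GammaUp. fold (gamma_integrand a).
  rewrite <- (RInt_gen_Chasles (gamma_integrand a) d);
    [| now apply ex_RInt_gen_at_point | apply ex_RInt_gen_gamma_at_p_infty; lra].
  rewrite RInt_gen_at_point_RInt by exact E.
  assert (0 <= RInt_gen (gamma_integrand a) (at_point d) (Rbar_locally p_infty)); [|unfold plus; simpl; lra].
  apply RInt_gen_ge_0.
  - eapply filter_imp; [|apply filter_prod_at_point_p_infty]. intros [u v] [Hu Hv]; simpl in *; lra.
  - intros; left; apply gamma_integrand_pos.
  - apply ex_RInt_gen_gamma_at_p_infty; lra.
Qed.

Lemma RInt_gamma_integrand_gt_0 (a c d : R) : 0 < c < d -> 0 < RInt (gamma_integrand a) c d.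
Proof.
  intros Hcd. apply RInt_gt_0; [lra | intros; apply gamma_integrand_pos |].
  intros; apply continuous_gamma_integrand; lra.
Qed.

Lemma GammaUp_pos (a y : R) : 0 < y -> 0 < GammaUp a y.
Proof.
  intros Hy. eapply Rlt_le_trans; [|apply (RInt_le_GammaUp a y (y + 1)); lra].
  apply RInt_gamma_integrand_gt_0. lra.
Qed.

Lemma RInt_le_GammaPos (a c d : R) : 0 < a -> 0 < c < d -> RInt (gamma_integrand a) c d <= GammaPos a.
Proof.
  intros Ha Hcd. unfold GammaPos. fold (gamma_integrand a).
  rewrite <- (RInt_gen_Chasles (gamma_integrand a) c);
    [| apply ex_RInt_gen_gamma_at_0; lra | apply ex_RInt_gen_gamma_at_p_infty; lra].
  assert (0 <= RInt_gen (gamma_integrand a) (at_right 0) (at_point c)).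
  { apply RInt_gen_ge_0.
    - apply Filter_prod with (fun u => u < c) (fun v => v = c); [| reflexivity | intros u v Hu ->; simpl; lra].
      exists (mkposreal c ltac:(lra)). intros u Hu _.
      apply ball_R_Rabs, Rabs_lt_between' in Hu. simpl in Hu. lra.
    - intros; left; apply gamma_integrand_pos.
    - apply ex_RInt_gen_gamma_at_0; lra. }
  pose proof (RInt_le_GammaUp a c d Hcd). unfold GammaUp in H0. fold (gamma_integrand a) in H0.
  unfold plus; simpl. lra.
Qed.

Lemma GammaPos_pos (a : R) : 0 < a -> 0 < GammaPos a.
Proof.
  intros Ha. eapply Rlt_le_trans; [|apply (RInt_le_GammaPos a 1 2); lra].
  apply RInt_gamma_integrand_gt_0. lra.
Qed.

Lemma Gamma_eq_GammaPos (a : R) : 0 < a -> Gamma a = GammaPos a.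
Proof.
  intros Ha. unfold Gamma. cbv zeta.
  destruct (archimed (- a)) as [Hup1 Hup2].
  assert (Hnp : (up (- a) < 1)%Z) by (apply lt_IZR; lra).
  replace (Z.to_nat (up (- a))) with 0%nat by lia.
  simpl. rewrite Rplus_0_r. field.
Qed.

Lemma Gamma_eq_GammaPos_succ (a : R) : -1 < a < 0 -> Gamma a = GammaPos (a + 1) / a.
Proof.
  intros Ha. unfold Gamma. cbv zeta.
  destruct (archimed (- a)) as [Hup1 Hup2].
  assert (Hone : up (- a) = 1%Z).
  { assert (0 < up (- a))%Z by (apply lt_IZR; lra).
    assert (up (- a) < 2)%Z by (apply lt_IZR; lra). lia. }
  rewrite Hone. simpl. f_equal; ring.
Qed.

Lemma GammaPos_ge_pow (n : nat) (a M : R) : 0 < a -> INR n - 1 <= a -> 1 <= M ->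
  M ^ n * exp (- (M + 1)) / (M + 1) ^ 2 <= GammaPos a.
Proof.
  intros Ha Hn HM.
  eapply Rle_trans; [|apply (RInt_le_GammaPos a M (M + 1)); lra].
  set (K := M ^ n * exp (- (M + 1)) / (M + 1) ^ 2).
  replace K with (RInt (fun _ => K) M (M + 1))
    by (rewrite RInt_const; unfold scal; simpl; unfold mult; simpl; ring).
  apply RInt_le; [lra | apply ex_RInt_const | |].
  { apply ex_RInt_continuous_R. intros t Ht. apply continuous_gamma_integrand.
    unfold Rmin in Ht; destruct Rle_dec; lra. }
  intros t Ht. unfold gamma_integrand, K.
  assert (Hpow : t ^ n / t ^ 2 <= Rpower t (a - 1)).
  { replace (t ^ n / t ^ 2) with (Rpower t (INR n + - INR 2)).
    - apply Rle_Rpower; simpl; lra.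
    - rewrite Rpower_plus, Rpower_Ropp, !Rpower_pow by lra. reflexivity. }
  assert (Hnum : M ^ n <= t ^ n) by (apply pow_incr; lra).
  assert (Hden : / (M + 1) ^ 2 <= / t ^ 2) by (apply Rinv_le_contravar; [apply pow_lt | apply pow_incr]; lra).
  assert (Hexp : exp (- (M + 1)) <= exp (- t)) by (apply exp_le_compat; lra).
  assert (0 <= M ^ n) by (apply pow_le; lra).
  assert (0 <= / (M + 1) ^ 2) by (left; apply Rinv_0_lt_compat, pow_lt; lra).
  pose proof (exp_pos (- (M + 1))).
  unfold Rdiv in *.
  apply Rle_trans with (t ^ n * / t ^ 2 * exp (- t)).
  - replace (M ^ n * exp (- (M + 1)) * / (M + 1) ^ 2) with (M ^ n * / (M + 1) ^ 2 * exp (- (M + 1))) by ring.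
    apply Rmult_le_compat; [apply Rmult_le_pos; lra | lra | | exact Hexp].
    apply Rmult_le_compat; lra.
  - apply Rmult_le_compat_r; [left; apply exp_pos | exact Hpow].
Qed.

(** * Bessel coefficients *)

Definition bessel_coef (nu : R) (k : nat) : R := / (INR (Factorial.fact k) * Gamma (INR k + nu + 1)).

Lemma BesselI_PSeries (nu z : R) : 0 < z ->
  BesselI nu z = Rpower (z / 2) nu * PSeries (bessel_coef nu) ((z / 2) ^ 2).
Proof.
  intros Hz. unfold BesselI, PSeries. rewrite <- Series_scal_l. apply Series_ext. intros k.
  replace (2 * INR k) with (INR (2 * k)) by (rewrite mult_INR; reflexivity).
  rewrite Rpower_plus, Rpower_pow, pow_mult by lra.
  unfold bessel_coef, Rdiv. ring.
Qed.

Section BesselCoefficients.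

Variable mu : R.
Hypothesis Hmu : -1 < mu < 0.

Local Notation c := (bessel_coef (mu - 1)).

Lemma bessel_coef_0 : c 0 = mu / GammaPos (mu + 1).
Proof.
  unfold bessel_coef. simpl. replace (0 + (mu - 1) + 1) with mu by ring.
  rewrite Gamma_eq_GammaPos_succ by exact Hmu.
  pose proof (GammaPos_pos (mu + 1) ltac:(lra)). field. lra.
Qed.

Lemma bessel_coef_succ (k : nat) :
  c (S k) = / (INR (Factorial.fact (S k)) * GammaPos (INR (S k) + mu)).
Proof.
  unfold bessel_coef. replace (INR (S k) + (mu - 1) + 1) with (INR (S k) + mu) by ring.
  rewrite Gamma_eq_GammaPos; [reflexivity|].
  rewrite S_INR. pose proof (pos_INR k). lra.
Qed.

Lemma bessel_coef_1 : c 1 = / GammaPos (mu + 1).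
Proof. rewrite bessel_coef_succ. simpl. f_equal. rewrite Rmult_1_l. f_equal. ring. Qed.

Lemma bessel_coef_pos (k : nat) : (1 <= k)%nat -> 0 < c k.
Proof.
  intros Hk. destruct k as [|k]; [lia|]. rewrite bessel_coef_succ.
  apply Rinv_0_lt_compat, Rmult_lt_0_compat; [apply INR_fact_lt_0 | apply GammaPos_pos].
  rewrite S_INR. pose proof (pos_INR k). lra.
Qed.

Definition bessel_bound (M : R) : R := Rmax (Rabs (c 0)) ((M + 1) ^ 2 * exp (M + 1)).

Lemma bessel_bound_pos (M : R) : 0 <= M -> 0 < bessel_bound M.
Proof.
  intros HM. eapply Rlt_le_trans; [|apply Rmax_r].
  apply Rmult_lt_0_compat; [apply pow_lt; lra | apply exp_pos].
Qed.

(* The growth [Gamma(k + mu) >= M^k / C_M] makes [c] decay faster than any geometric sequence. *)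
Lemma Rabs_bessel_coef_le (M : R) (k : nat) : 1 <= M ->
  Rabs (c k) <= bessel_bound M / (INR (Factorial.fact k) * M ^ k).
Proof.
  intros HM. destruct k as [|k].
  - simpl. rewrite Rmult_1_r. unfold Rdiv. rewrite Rinv_1, Rmult_1_r. apply Rmax_l.
  - rewrite Rabs_right by (left; apply bessel_coef_pos; lia).
    rewrite bessel_coef_succ.
    assert (Hk := pos_INR k). rewrite S_INR in *.
    pose proof (GammaPos_ge_pow (S k) (INR k + 1 + mu) M ltac:(lra) ltac:(rewrite S_INR; lra) HM) as Hg.
    assert (Hf := INR_fact_lt_0 (S k)).
    assert (HMk : 0 < M ^ S k) by (apply pow_lt; lra).
    assert (HM2 : 0 < (M + 1) ^ 2) by (apply pow_lt; lra).
    assert (Hlow : 0 < M ^ S k * exp (- (M + 1)) / (M + 1) ^ 2)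
      by (apply Rdiv_lt_0_compat; [apply Rmult_lt_0_compat; [exact HMk | apply exp_pos] | exact HM2]).
    apply Rle_trans with ((M + 1) ^ 2 * exp (M + 1) / (INR (Factorial.fact (S k)) * M ^ S k)).
    + replace ((M + 1) ^ 2 * exp (M + 1) / (INR (Factorial.fact (S k)) * M ^ S k))
        with (/ (INR (Factorial.fact (S k)) * (M ^ S k * exp (- (M + 1)) / (M + 1) ^ 2)))
        by (rewrite exp_Ropp; pose proof (exp_pos (M + 1)); field; repeat split; lra).
      apply Rinv_le_contravar; [now apply Rmult_lt_0_compat | apply Rmult_le_compat_l; lra].
    + apply Rmult_le_compat_r; [left; apply Rinv_0_lt_compat, Rmult_lt_0_compat; auto | apply Rmax_r].
Qed.

Lemma Rabs_bessel_term_le (M s : R) (k : nat) : 1 <= M ->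
  Rabs (c k * s ^ k) <= bessel_bound M * ((Rabs s / M) ^ k * / INR (Factorial.fact k)).
Proof.
  intros HM. rewrite Rabs_mult, <- RPow_abs.
  assert (Hf := INR_fact_lt_0 k). assert (0 < M ^ k) by (apply pow_lt; lra).
  replace (bessel_bound M * ((Rabs s / M) ^ k * / INR (Factorial.fact k)))
    with (bessel_bound M / (INR (Factorial.fact k) * M ^ k) * Rabs s ^ k)
    by (unfold Rdiv; rewrite Rpow_mult_distr, pow_inv; field; lra).
  apply Rmult_le_compat_r; [apply pow_le, Rabs_pos | now apply Rabs_bessel_coef_le].
Qed.

Lemma is_series_bessel_majorant (M s : R) :
  is_series (fun k => bessel_bound M * ((Rabs s / M) ^ k * / INR (Factorial.fact k)))
            (bessel_bound M * exp (Rabs s / M)).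
Proof.
  apply (is_series_scal_l (bessel_bound M) (fun k => (Rabs s / M) ^ k * / INR (Factorial.fact k))).
  eapply is_series_ext; [|apply (is_exp_Reals (Rabs s / M))].
  intros n. simpl. rewrite pow_n_pow. unfold scal; simpl; unfold mult; simpl. ring.
Qed.

Lemma CV_disk_bessel (s : R) : CV_disk c s.
Proof.
  apply (ex_series_le (K := R_AbsRing) (V := R_CompleteNormedModule) _
           (fun k => bessel_bound 1 * ((Rabs s / 1) ^ k * / INR (Factorial.fact k)))).
  - intros n. unfold norm; simpl; unfold abs; simpl. rewrite Rabs_Rabsolu.
    apply Rabs_bessel_term_le. lra.
  - eexists; apply is_series_bessel_majorant.
Qed.

Lemma Rabs_PSeries_bessel_le (M s : R) : 1 <= M ->
  Rabs (PSeries c s) <= bessel_bound M * exp (Rabs s / M).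
Proof.
  intros HM. unfold PSeries. eapply Rle_trans; [apply Series_Rabs, CV_disk_bessel|].
  rewrite <- (is_series_unique _ _ (is_series_bessel_majorant M s)).
  apply Series_le; [| eexists; apply is_series_bessel_majorant].
  intros n. split; [apply Rabs_pos | now apply Rabs_bessel_term_le].
Qed.

Lemma CV_radius_bessel (s : R) : Rbar_lt (Rabs s) (CV_radius c).
Proof.
  set (r := Rabs s + 1).
  assert (Hr : 0 <= r) by (unfold r; pose proof (Rabs_pos s); lra).
  apply Rbar_lt_le_trans with (Finite r); [simpl; unfold r; lra|].
  apply (proj1 (CV_radius_bounded c)).
  exists (bessel_bound 1 * exp r). intros n.
  eapply Rle_trans; [apply (Rabs_bessel_term_le 1); lra|].
  apply Rmult_le_compat_l; [left; apply bessel_bound_pos; lra|].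
  rewrite Rabs_right, Rdiv_1_r by lra.
  pose proof (pow_le_fact_exp r n Hr). pose proof (INR_fact_lt_0 n).
  apply (Rmult_le_reg_l (INR (Factorial.fact n))); [lra|].
  replace (INR (Factorial.fact n) * (r ^ n * / INR (Factorial.fact n))) with (r ^ n) by (field; lra).
  lra.
Qed.

Lemma continuous_PSeries_bessel (s : R) : continuous (PSeries c) s.
Proof. apply continuity_pt_filterlim, PSeries_continuity, CV_radius_bessel. Qed.

(* Only [c 0] is negative, so truncating after the quadratic term gives a lower bound. *)
Lemma PSeries_bessel_ge_quadratic (s : R) : 0 <= s ->
  c 0 + c 1 * s + c 2 * s ^ 2 <= PSeries c s.
Proof.
  intros Hs. unfold PSeries.
  rewrite (Series_incr_n _ 3) by (lia || now apply ex_series_Rabs, CV_disk_bessel).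
  set (T := Series (fun k => c (3 + k) * s ^ (3 + k))).
  assert (HT : 0 <= T).
  { assert (Habs := Series_Rabs _ (proj1 (ex_series_incr_n (fun k => Rabs (c k * s ^ k)) 3) (CV_disk_bessel s))).
    cbv beta in Habs.
    rewrite (Series_ext (fun k => Rabs (c (3 + k) * s ^ (3 + k))) (fun k => c (3 + k) * s ^ (3 + k))) in Habs.
    - fold T in Habs. pose proof (Rabs_pos T). lra.
    - intros n. apply Rabs_right, Rle_ge, Rmult_le_pos;
        [left; apply bessel_coef_pos; lia | now apply pow_le]. }
  simpl. lra.
Qed.

End BesselCoefficients.

(* Integration by parts, with [(t^a e^(-t))' = a t^(a-1) e^(-t) - t^a e^(-t)]. *)
Lemma GammaUp_succ (a y : R) : 0 < y ->
  GammaUp (a + 1) y = a * GammaUp a y + Rpower y a * exp (- y).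
Proof.
  intros Hy.
  set (dw := fun t => a * gamma_integrand a t - gamma_integrand (a + 1) t).
  assert (Hseg : filter_prod (at_point y) (Rbar_locally p_infty)
                   (fun ab : R * R => forall t, Rmin (fst ab) (snd ab) <= t <= Rmax (fst ab) (snd ab) -> 0 < t)).
  { eapply filter_imp; [|apply filter_prod_at_point_p_infty]. intros [u v] [Hu Hv] t Ht. simpl in *.
    subst u. rewrite Rmin_left in Ht by lra. lra. }
  assert (Hparts : is_RInt_gen dw (at_point y) (Rbar_locally p_infty) (0 - gamma_integrand (a + 1) y)).
  { apply is_RInt_gen_ext with (Derive (gamma_integrand (a + 1))).
    { eapply filter_imp; [|exact Hseg]. intros ab Hab t Ht.
      apply is_derive_unique, is_derive_gamma_integrand_succ, Hab. split; lra. }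
    apply is_RInt_gen_Derive.
    - eapply filter_imp; [|exact Hseg]. intros ab Hab t Ht.
      eexists; apply is_derive_gamma_integrand_succ, Hab, Ht.
    - eapply filter_imp; [|exact Hseg]. intros ab Hab t Ht.
      assert (Ht0 := Hab t Ht).
      apply continuous_ext_loc with dw.
      { eapply filter_imp; [|apply locally_gt_0, Ht0].
        intros u Hu. symmetry; apply is_derive_unique, is_derive_gamma_integrand_succ, Hu. }
      apply (continuous_minus (fun t => a * gamma_integrand a t) (gamma_integrand (a + 1)));
        [apply (continuous_scal_r a (gamma_integrand a)) |]; now apply continuous_gamma_integrand.
    - apply filterlim_at_point.
    - destruct (gamma_integrand_le_exp_half (a + 1) y Hy) as [C [HC HB]].
      apply (filterlim_p_infty_dominated_exp _ C y HC).
      intros t Ht. rewrite Rabs_right by (left; apply gamma_integrand_pos). now apply HB. }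
  assert (Hlin : is_RInt_gen dw (at_point y) (Rbar_locally p_infty) (a * GammaUp a y - GammaUp (a + 1) y)).
  { pose proof (is_RInt_gen_minus _ _ _ _ (is_RInt_gen_scal _ a _ (is_RInt_gen_GammaUp a y Hy))
                  (is_RInt_gen_GammaUp (a + 1) y Hy)) as H.
    apply (is_RInt_gen_ext _ dw) in H; [exact H|].
    apply filter_forall. intros ab t _. reflexivity. }
  apply (is_RInt_gen_unique (V := R_CompleteNormedModule)) in Hparts, Hlin.
  rewrite Hparts in Hlin. unfold gamma_integrand in Hlin. replace (a + 1 - 1) with a in Hlin by ring. lra.
Qed.

(** * The Marcum integrand *)

Definition marcum_kernel (mu x t : R) : R :=
  gamma_integrand mu t * PSeries (bessel_coef (mu - 1)) (x * t).

Lemma Qmu_eq_RInt_gen_marcum_kernel (mu x y : R) : 0 < x -> 0 < y ->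
  ex_RInt_gen (marcum_kernel mu x) (at_point y) (Rbar_locally p_infty) ->
  Qmu mu x y = exp (- x) * RInt_gen (marcum_kernel mu x) (at_point y) (Rbar_locally p_infty).
Proof.
  intros Hx Hy Hex.
  set (K := Rpower x ((mu - 1) / 2) * exp (- x)).
  assert (HI : is_RInt_gen
      (fun t => Rpower t ((mu - 1) / 2) * exp (- t - x) * BesselI (mu - 1) (2 * sqrt (x * t)))
      (at_point y) (Rbar_locally p_infty) (scal K (RInt_gen (marcum_kernel mu x) (at_point y) (Rbar_locally p_infty)))).
  { apply is_RInt_gen_ext with (fun t => scal K (marcum_kernel mu x t)).
    - eapply filter_imp; [|apply filter_prod_at_point_p_infty]. intros [u v] [Hu Hv] t Ht; simpl in *. subst u.
      rewrite Rmin_left in Ht by lra.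
      assert (Hxt : 0 < x * t) by nra.
      rewrite BesselI_PSeries by (apply Rmult_lt_0_compat; [lra | now apply sqrt_lt_R0]).
      replace (2 * sqrt (x * t) / 2) with (sqrt (x * t)) by field.
      rewrite pow2_sqrt by lra.
      rewrite <- Rpower_sqrt, Rpower_mult, <- Rpower_mult_distr by lra.
      replace (/ 2 * (mu - 1)) with ((mu - 1) / 2) by field.
      unfold scal; simpl; unfold mult; simpl. unfold marcum_kernel, gamma_integrand, K.
      replace (Rpower t (mu - 1)) with (Rpower t ((mu - 1) / 2) * Rpower t ((mu - 1) / 2))
        by (rewrite <- Rpower_plus; f_equal; field).
      replace (- t - x) with (- t + - x) by ring. rewrite exp_plus.
      ring.
    - apply (is_RInt_gen_scal (marcum_kernel mu x) K).
      apply (RInt_gen_correct (V := R_CompleteNormedModule)), Hex. }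
  apply (is_RInt_gen_unique (V := R_CompleteNormedModule)) in HI.
  unfold Qmu. rewrite HI. unfold scal; simpl; unfold mult; simpl. unfold K.
  rewrite <- !Rmult_assoc, <- Rpower_plus.
  replace ((1 - mu) / 2 + (mu - 1) / 2) with 0 by field. rewrite Rpower_O by exact Hx. ring.
Qed.

Section MarcumKernel.

Variable mu : R.
Hypothesis Hmu : -1 < mu < 0.

Local Notation c := (bessel_coef (mu - 1)).

Lemma continuous_marcum_kernel (x t : R) : 0 < t -> continuous (marcum_kernel mu x) t.
Proof.
  intros Ht. apply (continuous_mult (gamma_integrand mu) (fun t => PSeries c (x * t))).
  - now apply continuous_gamma_integrand.
  - apply (continuous_comp (fun t => x * t) (PSeries c)).
    + apply (ex_derive_continuous (fun t => x * t)). auto_derive; auto.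
    + now apply continuous_PSeries_bessel.
Qed.

(* With [M = 2x + 1] the Bessel factor grows at most like [e^(t/2)], which [e^(-t)] absorbs. *)
Lemma ex_RInt_gen_marcum_kernel (x y : R) : 0 < x -> 0 < y ->
  ex_RInt_gen (marcum_kernel mu x) (at_point y) (Rbar_locally p_infty).
Proof.
  intros Hx Hy.
  set (M := 2 * x + 1).
  set (C := Rpower y (mu - 1) * bessel_bound mu M).
  apply (ex_RInt_gen_dominated (Rbar_locally p_infty) (Rbar_locally_filter p_infty) y _
           (fun t => C * exp (- t / 2)) (C * (2 * exp (- y / 2)))).
  - exists y. intros b Hb t Ht.
    assert (Hyt : y <= t) by (unfold Rmin, Rmax in Ht; destruct Rle_dec; lra).
    split; [apply continuous_marcum_kernel; lra | split].
    + apply (ex_derive_continuous (fun t => C * exp (- t / 2))). auto_derive; auto.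
    + unfold marcum_kernel. rewrite Rabs_mult, (Rabs_right (gamma_integrand mu t))
        by (left; apply gamma_integrand_pos).
      assert (HM : 1 <= M) by (unfold M; lra).
      pose proof (Rabs_PSeries_bessel_le mu Hmu M (x * t) HM) as HP.
      rewrite (Rabs_right (x * t)) in HP by nra.
      assert (Hxt : x * t / M <= t / 2).
      { unfold M. apply (Rmult_le_reg_r (2 * x + 1)); [lra|].
        unfold Rdiv. rewrite Rmult_assoc, Rinv_l by lra. nra. }
      assert (He : exp (x * t / M) <= exp (t / 2)) by (apply exp_le_compat, Hxt).
      pose proof (Rpower_le_nonpos (mu - 1) y t ltac:(lra) ltac:(lra)) as Hr.
      pose proof (bessel_bound_pos mu M ltac:(unfold M; lra)) as HB.
      unfold gamma_integrand, C.
      replace (exp (- t / 2)) with (exp (- t) * exp (t / 2)) by (rewrite <- exp_plus; f_equal; field).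
      pose proof (Rpower_pos t (mu - 1)). pose proof (exp_pos (- t)). pose proof (exp_pos (t / 2)).
      apply Rle_trans with (Rpower t (mu - 1) * exp (- t) * (bessel_bound mu M * exp (t / 2))).
      * apply Rmult_le_compat_l; [nra|]. eapply Rle_trans; [exact HP|]. apply Rmult_le_compat_l; lra.
      * replace (Rpower y (mu - 1) * bessel_bound mu M * (exp (- t) * exp (t / 2)))
          with (Rpower y (mu - 1) * (exp (- t) * (bessel_bound mu M * exp (t / 2)))) by ring.
        rewrite Rmult_assoc. apply Rmult_le_compat_r; [|exact Hr].
        left; apply Rmult_lt_0_compat; [lra | now apply Rmult_lt_0_compat].
  - apply (is_RInt_gen_scal (fun t => exp (- t / 2)) C), is_RInt_gen_exp_half.
Qed.

Lemma marcum_kernel_ge (x t : R) : 0 < x -> 0 < t ->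
  c 0 * gamma_integrand mu t + c 1 * x * gamma_integrand (mu + 1) t
    + c 2 * x ^ 2 * gamma_integrand (mu + 2) t <= marcum_kernel mu x t.
Proof.
  intros Hx Ht.
  replace (mu + 2) with (mu + INR 2) by (simpl; ring).
  change (mu + 1) with (mu + INR 1).
  rewrite !gamma_integrand_add_nat by exact Ht.
  pose proof (PSeries_bessel_ge_quadratic mu Hmu (x * t) ltac:(nra)).
  pose proof (gamma_integrand_pos mu t).
  unfold marcum_kernel.
  apply Rle_trans with (gamma_integrand mu t * (c 0 + c 1 * (x * t) + c 2 * (x * t) ^ 2));
    [right; ring | apply Rmult_le_compat_l; lra].
Qed.

Lemma RInt_gen_marcum_kernel_ge (x y : R) : 0 < x -> 0 < y ->
  c 0 * GammaUp mu y + c 1 * x * GammaUp (mu + 1) y + c 2 * x ^ 2 * GammaUp (mu + 2) y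
    <= RInt_gen (marcum_kernel mu x) (at_point y) (Rbar_locally p_infty).
Proof.
  intros Hx Hy.
  pose proof (is_RInt_gen_plus _ _ _ _
    (is_RInt_gen_plus _ _ _ _
       (is_RInt_gen_scal _ (c 0) _ (is_RInt_gen_GammaUp mu y Hy))
       (is_RInt_gen_scal _ (c 1 * x) _ (is_RInt_gen_GammaUp (mu + 1) y Hy)))
    (is_RInt_gen_scal _ (c 2 * x ^ 2) _ (is_RInt_gen_GammaUp (mu + 2) y Hy))) as Hlow.
  assert (Hker : is_RInt_gen (marcum_kernel mu x) (at_point y) (Rbar_locally p_infty)
                   (RInt_gen (marcum_kernel mu x) (at_point y) (Rbar_locally p_infty)))
    by (apply (RInt_gen_correct (V := R_CompleteNormedModule)); now apply ex_RInt_gen_marcum_kernel).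
  refine (is_RInt_gen_le _ _ _ _ _ Hlow Hker).
  eapply filter_imp; [|apply filter_prod_at_point_p_infty]. intros [u v] [Hu Hv]; simpl in *. subst u.
  split; [lra|]. intros t Ht.
  unfold plus, scal; simpl; unfold mult; simpl.
  apply marcum_kernel_ge; lra.
Qed.

End MarcumKernel.

Theorem proposition1 (mu0 x y : R) :
  -1 < mu0 < 0 -> 0 < y -> 0 < x ->
  Rpower y mu0 * exp (- y) / GammaUp (mu0 + 1) y - 1 <= x ->
  0 < Qmu mu0 x y.
Proof.
  intros Hmu Hy Hx Hyp.
  rewrite Qmu_eq_RInt_gen_marcum_kernel by (auto; now apply ex_RInt_gen_marcum_kernel).
  apply Rmult_lt_0_compat; [apply exp_pos|].
  eapply Rlt_le_trans; [|now apply RInt_gen_marcum_kernel_ge].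
  rewrite bessel_coef_0, bessel_coef_1 by exact Hmu.
  set (P := Rpower y mu0 * exp (- y)) in *.
  set (G := GammaPos (mu0 + 1)).
  assert (HG : 0 < G) by (apply GammaPos_pos; lra).
  assert (HU1 := GammaUp_pos (mu0 + 1) y Hy).
  assert (HP : P <= (x + 1) * GammaUp (mu0 + 1) y).
  { apply (Rmult_le_compat_r (GammaUp (mu0 + 1) y)) in Hyp; [|lra].
    unfold Rdiv in Hyp. rewrite Rmult_minus_distr_r, Rmult_assoc, Rinv_l in Hyp by lra. lra. }
  (* By [GammaUp_succ], the two leading terms combine into [((x + 1) U1 - P) / G]. *)
  assert (Hlead : 0 <= mu0 / G * GammaUp mu0 y + / G * x * GammaUp (mu0 + 1) y).
  { replace (mu0 / G * GammaUp mu0 y + / G * x * GammaUp (mu0 + 1) y)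
      with (((x + 1) * GammaUp (mu0 + 1) y - P) / G)
      by (rewrite (GammaUp_succ mu0 y Hy); unfold P; field; lra).
    apply Rdiv_le_0_compat; lra. }
  assert (0 < bessel_coef (mu0 - 1) 2 * x ^ 2 * GammaUp (mu0 + 2) y).
  { apply Rmult_lt_0_compat; [apply Rmult_lt_0_compat|]; [apply bessel_coef_pos; lia || lra | | ].
    - now apply pow_lt.
    - now apply GammaUp_pos. }
  lra.
Qed.
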